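(* For a (Hausdorff) space $X$ the following are equivalent: (i) For every topological vector space $E$, each convex-valued totally-l.s.c. mapping $\Phi:X\rightrightarrows E$ has a continuous selection. (ii) For every set $\mathcal{A}$, each convex-valued totally-l.s.c. mapping $\Phi:X\rightrightarrows\mathbf{c}_{00}(\mathcal{A})$ has a continuous selection (continuity with respect to the norm $\|\cdot\|_1$). (iii) Each open cover of $X$ has an index-subordinated partition of unity. (iv) For every vector space $E$, each convex-valued totally-l.s.c. mapping $\Phi:X\rightrightarrows E$ has a selection which is continuous with respect to the finite topology on $E$.
   Context: A set-valued mapping $\Phi:X\rightrightarrows Y$ assigns to each $x\in X$ a nonempty $\Phi(x)\subseteq Y$; it is convex-valued if each $\Phi(x)$ is convex, and totally-l.s.c. if $\{x:\Phi(x)\cap U\ne\emptyset\}$ is open for every subset $U\subseteq Y$ (no topology on $Y$ is used). A selection is a map $f$ with $f(x)\in\Phi(x)$ for all $x$. $\mathbf{c}_{00}(\mathcal{A})$ is the space of finitely supported functions $\mathcal{A}\to\mathbb{R}$ with $\|y\|_1=\sum|y(\alpha)|$. The finite topology on a vector space $E$: $U$ is open iff $U\cap L$ is open in $L$ for each finite-dimensional linear subspace $L$ (Euclidean topology). An open cover of $X$ indexed by a set $\mathcal{A}$ is a family $\{U_\alpha\}_{\alpha\in\mathcal{A}}$ of open sets with union $X$. A partition of unity indexed by $\mathcal{A}$ is a family of continuous $\xi_\alpha:X\to[0,1]$ with $\sum_\alpha\xi_\alpha(x)=1$ for each $x$ (only countably many nonzero at each $x$, series converging to $1$); it is index-subordinated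 to $\{U_\alpha\}$ if $\{x:\xi_\alpha(x)\ne0\}\subseteq U_\alpha$ for every $\alpha$. *)

From HB Require Import structures.
From mathcomp Require Import all_boot all_order all_algebra.
From mathcomp Require Import all_classical all_reals all_analysis.
Set Implicit Arguments. Unset Strict Implicit. Unset Printing Implicit Defensive.
Import Order.TTheory GRing.Theory Num.Theory.
Import numFieldNormedType.Exports.
Local Open Scope classical_set_scope.
Local Open Scope ring_scope.

Definition setvalued (X Y : Type) (Phi : X -> set Y) : Prop :=
  forall x, Phi x !=set0.

Definition convex_valued (R : realType) (X : Type) (E : lmodType R)
  (Phi : X -> set E) : Prop :=
  forall x, convex_set (Phi x : set (convex_lmodType E)).

Definition totally_lsc (X : topologicalType) (Y : Type) (Phi : X -> set Y) : Prop :=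
  forall U : set Y, open [set x | Phi x `&` U !=set0].

Definition selection (X Y : Type) (Phi : X -> set Y) (f : X -> Y) : Prop :=
  forall x, Phi x (f x).

Definition c00 (R : realType) (A : choiceType) : set (A -> R) :=
  [set y | finite_set [set a | y a != 0]].

Definition l1dist (R : realType) (A : choiceType) (y z : A -> R) : R :=
  \sum_(a \in [set: A]) `|y a - z a|.

Definition l1_continuous (R : realType) (X : topologicalType) (A : choiceType)
  (f : X -> A -> R) : Prop :=
  forall x (e : R), 0 < e -> \forall y \near x, l1dist (f y) (f x) < e.

Definition lin_indep (R : realType) (E : lmodType R) (n : nat) (v : 'I_n -> E) : Prop :=
  forall c : 'rV[R]_n, \sum_(i < n) c 0 i *: v i = 0 -> c = 0.

(* Finite topology on a vector space E: U is open iff U ∩ L is open in L for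
   each finite-dimensional linear subspace L, L carrying its Euclidean topology.
   A finite-dimensional L is given by a basis v_0..v_{n-1}; its Euclidean
   topology is transported from R^n = 'rV[R]_n along the coordinate map
   c |-> sum_i c_i v_i, so "U ∩ L open in L" reads: the set of coordinate
   vectors c with sum_i c_i v_i ∈ U is open in R^n. *)
Definition finite_open (R : realType) (E : lmodType R) (U : set E) : Prop :=
  forall (n : nat) (v : 'I_n -> E), lin_indep v ->
    open [set c : 'rV[R]_n | U (\sum_(i < n) c 0 i *: v i)].

Definition finite_top_continuous (R : realType) (X : topologicalType)
  (E : lmodType R) (f : X -> E) : Prop :=
  forall U : set E, finite_open U -> open (f @^-1` U).

Definition open_cover (X : topologicalType) (A : Type) (U : A -> set X) : Prop :=
  (forall a, open (U a)) /\ \bigcup_(a in [set: A]) U a = [set: X].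

Definition index_subordinated_pou (R : realType) (X : topologicalType)
  (A : choiceType) (U : A -> set X) (xi : A -> X -> R) : Prop :=
  [/\ (forall a, continuous (xi a)),
      (forall a x, 0 <= xi a x <= 1),
      (forall x, countable [set a | xi a x != 0]),
      (forall x, (\esum_(a in [set: A]) (xi a x)%:E = 1)%E) &
      (forall a, [set x | xi a x != 0] `<=` U a)].

(* Everything goes through (iii).  Given a convex-valued totally l.s.c. [Phi],
   the sets [{x | a \in Phi x}], [a \in E], form an open cover of [X]; let [xi]
   be an index-subordinated partition of unity.  Truncating [xi] at half its
   pointwise maximum yields a locally finite family [eta] with smaller
   supports, and [f = (sum_a eta_a a) / (sum_a eta_a)] is a selection by
   convexity.  Near every point, [f] is a fixed finite combination of points of
   the values with coefficients continuous there, which makes it continuous for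
   the finite topology and, in [c00], for the l1-norm.  Conversely, a continuous selection of
   [x |-> {finitely supported probability vectors carried by {a | x \in U a}}],
   in [c00(A)] with the l1-norm or with the product topology, is a partition
   of unity subordinated to [U].  Finally, open sets of a topological vector
   space are open in the finite topology, so (iv) implies (i). *)

From HB Require Import structures.
From mathcomp Require Import all_boot all_order all_algebra finmap.
From mathcomp Require Import all_classical all_reals all_analysis.
From mathcomp.algebra_tactics Require Import lra.
Import Order.TTheory GRing.Theory Num.Theory.
Import numFieldNormedType.Exports.
Local Open Scope classical_set_scope.
Local Open Scope ring_scope.

Lemma near_forall_in_fset {T : Type} {I : choiceType} (F : set_system T)
    {FF : Filter F} (D : {fset I}) (P : I -> T -> Prop) :
  (forall i, i \in D -> \forall x \near F, P i x) ->
  \forall x \near F, forall i, i \in D -> P i x.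
Proof. by move=> FP; apply: filterS (filter_bigI FF FP) => x + i iD; apply. Qed.

Lemma cvg_sumr {R : realType} {T : Type} (F : set_system T) {FF : Filter F}
    {I : Type} (s : seq I) {h : I -> T -> R} {l : I -> R} :
  (forall i, h i x @[x --> F] --> l i) ->
  \sum_(i <- s) h i x @[x --> F] --> \sum_(i <- s) l i.
Proof. by move=> hl; apply: cvg_big => [|i _]; [exact: add_continuous|exact: hl]. Qed.

Lemma cvg_sum_scale {R : realType} {E : topologicalLmodType R} {T : Type}
    (F : set_system T) {FF : Filter F} {I : Type} (s : seq I) (p : I -> E)
    {c : I -> T -> R} {l : I -> R} :
  (forall i, c i x @[x --> F] --> l i) ->
  \sum_(i <- s) c i x *: p i @[x --> F] --> \sum_(i <- s) l i *: p i.
Proof.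
move=> cl; apply: cvg_big => [|i _]; first exact: add_continuous.
exact: (cvg_comp _ _ (cvg_pair (cl i) (cvg_cst (p i)))
  (@scale_continuous R E (l i, p i))).
Qed.

Lemma cvg_coord_rV (R : realType) (T : Type) (F : set_system T) {FF : Filter F}
    n (g : T -> 'rV[R]_n) (l : 'rV[R]_n) :
  (forall i, g z 0 i @[z --> F] --> l 0 i) -> g z @[z --> F] --> l.
Proof.
move=> gl s /(nbhs_ballP l) [e e0 es].
have : \forall z \near F, forall i, ball (l 0 i) e (g z 0 i).
  by apply: filter_forall => i; exact: (gl i _ (nbhsx_ballx (l 0 i) e e0)).
by apply: filterS => z gz; apply: es; split=> // i j; rewrite (ord1 i).
Qed.

Lemma cvg_initial {S : choiceType} {T : topologicalType} (f : S -> T)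
    (F : set_system S) {FF : Filter F} (s : S) :
  f @ F --> f s -> F --> (s : initial_topology f).
Proof.
move=> fFs C /= [_ [[B B_open <-] Bfs sBC]].
by apply: filterS sBC (fFs _ _); exact: open_nbhs_nbhs.
Qed.

Lemma convex_set_comb (R : realType) (E : lmodType R) (C : set E)
    (convC : convex_set (C : set (convex_lmodType E))) (I : eqType) (s : seq I)
    (w : I -> R) (p : I -> E) :
  (forall i, 0 <= w i) -> \sum_(i <- s) w i = 1 ->
  (forall i, w i != 0 -> C (p i)) -> C (\sum_(i <- s) w i *: p i).
Proof.
elim: s w => [|a s IH] w w_ge0.
  by rewrite big_nil => /eqP; rewrite eq_sym oner_eq0.
rewrite !big_cons => w1 Cp; set t := \sum_(i <- s) w i in w1.
have t_ge0 : 0 <= t by apply: sumr_ge0.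
have [t0|t_neq0] := eqVneq t 0.
  have wa1 : w a = 1 by rewrite -w1 t0 addr0.
  have : \sum_(i <- s) w i == 0 by rewrite -/t t0.
  rewrite psumr_eq0 // => /allP ws0.
  rewrite big1_seq => [|i /andP[_ /ws0/eqP ->]]; last by rewrite scale0r.
  by rewrite addr0 wa1 scale1r; apply: Cp; rewrite wa1 oner_eq0.
have [wa0|wa_neq0] := eqVneq (w a) 0.
  by rewrite wa0 scale0r add0r; apply: IH => //; rewrite -w1 wa0 add0r.
(* Write the combination as [w a *: p a + t *: q] with [q] a combination of the tail. *)
pose q := \sum_(i <- s) (w i / t) *: p i.
have Cq : C q.
  apply: IH => [i||i].
  - by rewrite divr_ge0.
  - by rewrite -mulr_suml divff.
  - by rewrite mulf_eq0 negb_or => /andP[/Cp].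
have -> : \sum_(i <- s) w i *: p i = t *: q.
  by rewrite scaler_sumr; apply: eq_bigr => i _; rewrite scalerA mulrCA divff ?mulr1.
have wa_le1 : w a <= 1 by rewrite -w1 lerDl.
have := convC (p a) q (Itv01 (w_ge0 a) wa_le1).
rewrite !inE => /(_ (Cp a wa_neq0) Cq); congr C => /=.
by congr (_ + _ *: _); rewrite /unstable.onem /=; lra.
Qed.

Definition locally_finite_combination {R : realType} {X : topologicalType}
    {E : lmodType R} (Phi : X -> set E) (f : X -> E) :=
  forall x, exists n (p : 'I_n -> E) (c : 'I_n -> X -> R),
    [/\ forall i, {for x, continuous (c i)},
        forall i z, c i z != 0 -> Phi z (p i) &
        \forall z \near x, f z = \sum_(i < n) c i z *: p i].

Lemma open_finite_open (R : realType) (E : topologicalLmodType R) (U : set E) :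
  open U -> finite_open U.
Proof.
move=> oU n v _; apply: (proj1 (continuousP _)) oU => c.
by apply: (@cvg_sum_scale R E _ (nbhs c) (nbhs_filter c)) => i; exact: coord_continuous.
Qed.

Lemma finite_top_continuous_continuous (R : realType) (X : topologicalType)
    (E : topologicalLmodType R) (f : X -> E) :
  finite_top_continuous f -> continuous f.
Proof. by move=> f_cont; apply/continuousP => U /open_finite_open; exact: f_cont. Qed.

Lemma not_lin_indep_lift (R : realType) (E : lmodType R) m (v : 'I_m.+1 -> E) :
  ~ lin_indep v -> exists j (d : 'I_m -> R), v j = \sum_(k < m) d k *: v (lift j k).
Proof.
move=> /existsNP [c /not_implyP [c_v c_neq0]].
have [j cj] : exists j, c 0 j != 0.
  apply: contrapT => c0; apply: c_neq0; apply/rowP => j; rewrite !mxE.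
  by apply: contrapT => /eqP cj; apply: c0; exists j.
exists j, (fun k => - (c 0 (lift j k) / c 0 j)).
move: c_v; rewrite (bigD1_ord j) //= => /eqP; rewrite addr_eq0 => /eqP c_vj.
rewrite -[v j]scale1r -(mulVf cj) -scalerA c_vj scalerN scaler_sumr -sumrN.
by apply: eq_bigr => k _; rewrite scalerA -scaleNr mulrC.
Qed.

(* A finitely open set pulls back to an open set of coefficients along any finite
   family, independent or not: dependent vectors are eliminated one at a time. *)
Lemma finite_open_comb (R : realType) (E : lmodType R) (U : set E) :
  finite_open U -> forall n (v : 'I_n -> E),
  open [set c : 'rV[R]_n | U (\sum_(i < n) c 0 i *: v i)].
Proof.
move=> U_open; elim=> [|m IH] v; first by apply: U_open => c _; exact: thinmx0.
have [|/not_lin_indep_lift [j [d vj]]] := pselect (lin_indep v); first exact: U_open.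
pose pi (c : 'rV[R]_m.+1) : 'rV[R]_m := \row_k (c 0 (lift j k) + c 0 j * d k).
have pi_cont : continuous pi.
  move=> c; apply: (@cvg_coord_rV _ _ (nbhs c) (nbhs_filter c)) => k.
  under eq_fun do rewrite mxE.
  rewrite mxE; apply: cvgD; [|apply: cvgM; [|exact: cvg_cst]];
    exact: coord_continuous.
have piE (c : 'rV_m.+1) :
    \sum_(i < m.+1) c 0 i *: v i = \sum_(k < m) pi c 0 k *: v (lift j k).
  rewrite (bigD1_ord j) //= vj scaler_sumr -big_split /=.
  by apply: eq_bigr => k _; rewrite mxE scalerA scalerDl addrC.
suff -> : [set c : 'rV[R]_m.+1 | U (\sum_(i < m.+1) c 0 i *: v i)] =
    pi @^-1` [set c | U (\sum_(k < m) c 0 k *: v (lift j k))].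
  exact: (proj1 (continuousP _) pi_cont _ (IH _)).
by apply/seteqP; split=> c /=; rewrite piE.
Qed.

Lemma locally_finite_combination_finite_top_continuous {R : realType}
    {X : topologicalType} {E : lmodType R} {Phi : X -> set E} {f : X -> E} :
  locally_finite_combination Phi f -> finite_top_continuous f.
Proof.
move=> f_loc U U_open; rewrite openE => x /= Ufx.
have [n [p [c [c_cont _ f_near]]]] := f_loc x.
pose g z : 'rV[R]_n := \row_i c i z.
have g_cont : g z @[z --> x] --> g x.
  apply: (@cvg_coord_rV _ _ (nbhs x) (nbhs_filter x)) => i.
  by under eq_fun do rewrite mxE; rewrite mxE; exact: c_cont.
have gE z : \sum_(i < n) c i z *: p i = \sum_(i < n) g z 0 i *: p i.
  by apply: eq_bigr => i _; rewrite mxE.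
have : \forall z \near x, U (\sum_(i < n) g z 0 i *: p i).
  apply: (g_cont [set c | U (\sum_(i < n) c 0 i *: p i)]).
  apply: open_nbhs_nbhs; split; first exact: finite_open_comb.
  by rewrite /= -gE -(nbhs_singleton f_near).
move=> near_U.
apply: (@filterS _ (nbhs x) _ _ _ _ (filterI f_near near_U)) => z [fz Uz].
by rewrite /preimage /= fz gE.
Qed.

Section finitely_supported.
Context {R : realType} {A : choiceType}.
Implicit Types (y w : A -> R) (k : R).

Lemma fsumT_finite_support {g : A -> R} {D : set A} : finite_set D ->
  (forall a, ~ D a -> g a = 0) ->
  \sum_(a \in [set: A]) g a = \sum_(a <- fset_set D) g a.
Proof.
move=> D_fin gD; apply: fsbigTE => a; rewrite in_fset_set // => aD.
by apply: gD => Da; move: aD; rewrite mem_set.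
Qed.

Lemma le_term_fsumT (g : A -> R) a : finite_set [set b | g b != 0] ->
  (forall b, 0 <= g b) -> g a <= \sum_(b \in [set: A]) g b.
Proof.
move=> g_fin g_ge0; rewrite (fsumT_finite_support g_fin); last first.
  by move=> b /negP; rewrite negbK => /eqP.
have [->|ga] := eqVneq (g a) 0; first by rewrite sumr_ge0.
rewrite (bigD1_seq a) ?fset_uniq //=; last by rewrite in_fset_set // inE.
by rewrite lerDl sumr_ge0.
Qed.

Lemma c00_0 : c00 (0 : A -> R).
Proof.
by rewrite /c00 /=; apply: (@sub_finite_set _ _ set0) => // b /=; rewrite eqxx.
Qed.

Lemma c00_supportU {y w} : c00 y -> c00 w ->
  finite_set ([set b | y b != 0] `|` [set b | w b != 0]).
Proof. by move=> y_fin w_fin; rewrite finite_setU. Qed.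

Lemma c00D {y w} : c00 y -> c00 w -> c00 (y + w).
Proof.
move=> y_fin w_fin; rewrite /c00 /=.
apply: (sub_finite_set _ (c00_supportU y_fin w_fin)) => b /=.
apply: contraPP => /not_orP [/negP/negPn/eqP yb /negP/negPn/eqP wb].
have -> : (y + w) b = y b + w b by [].
by rewrite yb wb addr0 eqxx.
Qed.

Lemma c00Z {k y} : (k != 0 -> c00 y) -> c00 (k *: y).
Proof.
move=> y_fin; have [->|k0] := eqVneq k 0; first by rewrite scale0r; exact: c00_0.
rewrite /c00 /=; apply: (sub_finite_set _ (y_fin k0)) => b /=.
by rewrite mulf_eq0 negb_or => /andP[].
Qed.

Definition l1norm y := \sum_(b \in [set: A]) `|y b|.

Lemma l1normD {y w} : c00 y -> c00 w -> l1norm (y + w) <= l1norm y + l1norm w.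
Proof.
move=> y_fin w_fin; have D_fin := c00_supportU y_fin w_fin.
rewrite /l1norm !(fsumT_finite_support D_fin) -?big_split /=.
- by apply: ler_sum => b _; exact: ler_normD.
- by move=> a /not_orP [_ /negP/negPn/eqP ->]; rewrite normr0.
- by move=> a /not_orP [/negP/negPn/eqP -> _]; rewrite normr0.
- move=> a /not_orP [/negP/negPn/eqP ya /negP/negPn/eqP wa].
  have -> : (y + w) a = y a + w a by [].
  by rewrite ya wa addr0 normr0.
Qed.

Lemma l1normZ k y : l1norm (k *: y) = `|k| * l1norm y.
Proof. by rewrite /l1norm mulr_fsumr; apply: eq_fsbigr => b _; rewrite normrM. Qed.

Lemma l1norm_comb {I : Type} (s : seq I) {k : I -> R} {p : I -> A -> R} :
  (forall i, k i != 0 -> c00 (p i)) ->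
  c00 (\sum_(i <- s) k i *: p i) /\
  l1norm (\sum_(i <- s) k i *: p i) <= \sum_(i <- s) `|k i| * l1norm (p i).
Proof.
move=> p_fin; elim: s => [|i s [IH_fin IH_le]].
  rewrite !big_nil; split; first exact: c00_0.
  by rewrite /l1norm fsbig1 // => b _; rewrite normr0.
have kp_fin := c00Z (p_fin i).
rewrite !big_cons; split; first exact: c00D.
by apply: le_trans (l1normD kp_fin IH_fin) _; rewrite l1normZ lerD2l.
Qed.

Lemma le_l1dist_coord {y w} a : c00 y -> c00 w -> `|y a - w a| <= l1dist y w.
Proof.
move=> y_fin w_fin; apply: (@le_term_fsumT (fun b => `|y b - w b|)) => //.
apply: (sub_finite_set _ (c00_supportU y_fin w_fin)) => b /=; rewrite normr_eq0.
apply: contraPP => /not_orP [/negP/negPn/eqP -> /negP/negPn/eqP ->].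
by rewrite subrr eqxx.
Qed.

End finitely_supported.

Lemma locally_finite_combination_l1_continuous {R : realType} {X : topologicalType}
    {A : choiceType} {Phi : X -> set (A -> R)} {f : X -> A -> R} :
  (forall x, Phi x `<=` @c00 R A) -> locally_finite_combination Phi f ->
  l1_continuous f.
Proof.
move=> Phi_c00 f_loc x e e0; have [n [p [c [c_cont c_Phi f_near]]]] := f_loc x.
have p_c00 z i : c i z - c i x != 0 -> c00 (p i).
  move=> czx; have [cz|cz] := eqVneq (c i z) 0; last exact: Phi_c00 (c_Phi i z cz).
  by apply: (Phi_c00 x); apply: c_Phi; move: czx; rewrite cz sub0r oppr_eq0.
have near_le : \forall z \near x,
    l1dist (f z) (f x) <= \sum_(i < n) `|c i z - c i x| * l1norm (p i).
  have fx := nbhs_singleton f_near; apply: filterS f_near => z fz.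
  rewrite -[l1dist _ _]/(l1norm (f z - f x)) fz fx -sumrB.
  under eq_bigr do rewrite -scalerBl.
  exact: (l1norm_comb _ (p_c00 z)).2.
have bound_cvg : \sum_(i < n) `|c i z - c i x| * l1norm (p i) @[z --> x] -->
    \sum_(i < n) `|c i x - c i x| * l1norm (p i).
  apply: cvg_sumr => i; apply: cvgM; last exact: cvg_cst.
  by apply: cvg_norm; apply: cvgB; [exact: c_cont|exact: cvg_cst].
have bound_x : \sum_(i < n) `|c i x - c i x| * l1norm (p i) < e.
  by rewrite big1 // => i _; rewrite subrr normr0 mul0r.
have near_lt := @cvgr_lt _ _ (nbhs x) (nbhs_filter x) _ _ bound_cvg e bound_x.
apply: (@filterS _ (nbhs x) _ _ _ _ (filterI near_lt near_le)) => z [lt_e le_bound].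
exact: le_lt_trans le_bound lt_e.
Qed.

Section partition_of_unity.
Context {R : realType} {X : topologicalType} {A : choiceType} (xi : A -> X -> R).
Hypothesis xi_cont : forall a, continuous (xi a).
Hypothesis xi_ge0 : forall a x, 0 <= xi a x.
Hypothesis xi_le1 : forall a x, xi a x <= 1.
Hypothesis xi_sum1 : forall x, (\esum_(a in [set: A]) (xi a x)%:E = 1)%E.

Lemma pou_fsum_le1 (F : {fset A}) x : \sum_(a <- F) xi a x <= 1.
Proof.
have : (\sum_(a \in [set` F]) (xi a x)%:E <= \esum_(a in [set: A]) (xi a x)%:E)%E.
  by apply: ereal_sup_ubound; exists [set` F].
rewrite xi_sum1 fsumEFin ?lee_fin; last exact: finite_fset.
by rewrite fsbig_finite ?set_fsetK //; exact: finite_fset.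
Qed.

Lemma pou_fsum_gt x e : 0 < e -> exists F : {fset A}, 1 - e < \sum_(a <- F) xi a x.
Proof.
move=> e0; have : ((1 - e)%:E < \esum_(a in [set: A]) (xi a x)%:E)%E.
  by rewrite xi_sum1 lte_fin ltrBlDr ltrDl.
move=> /ereal_sup_gt [_ [S [finS _] <-]].
by rewrite fsumEFin // lte_fin => ltS; exists (fset_set S); rewrite -fsbig_finite.
Qed.

(* Only finitely many [xi a] can exceed [e] near [x], since their sum is at most 1
   and the sum over a finite [F] is already close to 1 near [x]. *)
Lemma pou_near_small (x : X) e : 0 < e ->
  exists F : {fset A}, \forall z \near x, forall a, a \notin F -> xi a z < e.
Proof.
move=> e0; have [F ltF] := pou_fsum_gt x e e0; exists F.
have cvgF : \sum_(a <- F) xi a z @[z --> x] --> \sum_(a <- F) xi a x.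
  by apply: cvg_sumr => a; exact: xi_cont.
apply: filterS (cvgr_gt _ cvgF _ ltF) => z ltz a aF.
have := pou_fsum_le1 (a |` F)%fset z; rewrite big_fsetU1 //= => le1.
by rewrite -(ltrD2r (\sum_(a <- F) xi a z)) (le_lt_trans le1) // -ltrBlDl.
Qed.

Lemma pou_exists_gt0 x : exists a, 0 < xi a x.
Proof.
apply: contrapT => xi0.
suff : (\esum_(a in [set: A]) (xi a x)%:E = 0)%E.
  by rewrite xi_sum1 => /eqP; rewrite eqe oner_eq0.
apply: esum1 => a _; congr (_%:E); apply/eqP; rewrite eq_le xi_ge0 andbT leNgt.
by apply/negP => ?; apply: xi0; exists a.
Qed.

Definition pou_max x : R := sup (range (xi ^~ x)).

Lemma has_sup_pou x : has_sup (range (xi ^~ x)).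
Proof.
split; first by have [a _] := pou_exists_gt0 x; exists (xi a x), a.
by exists 1 => _ [a _ <-].
Qed.

Lemma le_pou_max a x : xi a x <= pou_max x.
Proof. by apply: sup_upper_bound (has_sup_pou x) _ _; exists a. Qed.

Lemma pou_max_gt0 x : 0 < pou_max x.
Proof.
by have [a xa0] := pou_exists_gt0 x; exact: lt_le_trans xa0 (le_pou_max a x).
Qed.

Lemma pou_max_gt x e : 0 < e -> exists a, pou_max x - e < xi a x.
Proof.
move=> e0; have := sup_gt (has_sup_pou x).1 (_ : pou_max x - e < pou_max x).
by rewrite ltrBlDr ltrDl => /(_ e0) [_ [a _ <-]]; exists a.
Qed.

Lemma continuous_pou_max : continuous pou_max.
Proof.
move=> x; apply/cvgrPdist_lt => e e0.
have [a lt_a] := pou_max_gt x e e0.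
have near_a : \forall z \near x, pou_max x - e < xi a z :=
  @cvgr_gt _ _ _ (nbhs_filter x) _ _ (xi_cont a x) _ lt_a.
have e20 : 0 < e / 2 by rewrite divr_gt0.
have [F smallF] := pou_near_small x (e / 2) e20.
have near_F : \forall z \near x, forall b, b \in F -> xi b z < xi b x + e / 2.
  by apply: near_forall_in_fset => b _; apply: cvgr_lt; [exact: xi_cont|rewrite ltrDl].
apply: (@filterS _ (nbhs x) _ _ _ _ (filterI near_a (filterI smallF near_F))).
move=> z [lt_az [small_z near_z]].
rewrite ltr_distlC (lt_le_trans lt_az (le_pou_max a z)) /=.
apply: (@le_lt_trans _ _ (pou_max x + e / 2)); last first.
  by rewrite ltrD2l ltr_pdivrMr // ltr_pMr // ltr1n.
apply: ge_sup; first by exists (xi a z), a.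
move=> _ [b _ <-]; apply/ltW; have [bF|bF] := boolP (b \in F).
  by apply: lt_le_trans (near_z b bF) _; rewrite lerD2r le_pou_max.
by apply: lt_le_trans (small_z b bF) _; rewrite lerDr ltW // pou_max_gt0.
Qed.

(* Truncation at half the pointwise maximum makes the family locally finite:
   near [x] the maximum stays above [pou_max x / 2], while only finitely many
   [xi a] exceed [pou_max x / 4]. *)
Definition pou_trunc a z := Num.max 0 (xi a z - pou_max z / 2).

Lemma pou_trunc_ge0 a z : 0 <= pou_trunc a z.
Proof. by rewrite le_max lexx. Qed.

Lemma pou_trunc_neq0 a z : pou_trunc a z != 0 -> xi a z != 0.
Proof.
rewrite /pou_trunc; apply: contraNN => /eqP xi0; apply/eqP/max_idPl.
by rewrite xi0 sub0r oppr_le0 divr_ge0 // ltW // pou_max_gt0.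
Qed.

Lemma continuous_pou_trunc a : continuous (pou_trunc a).
Proof.
move=> x; apply: (@continuous_max R X (fun=> 0) (fun z => xi a z - pou_max z / 2) x).
  exact: cvg_cst.
apply: cvgB; first exact: xi_cont.
by apply: cvgM; [exact: continuous_pou_max|exact: cvg_cst].
Qed.

Lemma pou_trunc_exists_gt0 z : exists a, 0 < pou_trunc a z.
Proof.
have [|a lt_a] := pou_max_gt z (pou_max z / 2) (_ : 0 < pou_max z / 2).
  by rewrite divr_gt0 ?pou_max_gt0.
exists a; rewrite lt_max subr_gt0; apply/orP; right.
by apply: le_lt_trans lt_a; lra.
Qed.

Lemma pou_trunc_locally_finite (x : X) : exists F : {fset A},
  \forall z \near x, forall a, a \notin F -> pou_trunc a z = 0.
Proof.
have [|F small_F] := pou_near_small x (pou_max x / 4) (_ : 0 < pou_max x / 4).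
  by rewrite divr_gt0 ?pou_max_gt0.
exists F.
have mx0 := pou_max_gt0 x.
have near_max : \forall z \near x, pou_max x / 2 < pou_max z.
  by apply: cvgr_gt; [exact: continuous_pou_max|lra].
apply: filterS (filterI small_F near_max) => z [small_z max_z] a aF.
apply/max_idPl; rewrite subr_le0; apply/ltW/(lt_trans (small_z a aF)); lra.
Qed.


Section selection.
Context {E : lmodType R} (Phi : X -> set E) (v : A -> E).
Hypothesis Phi_convex : convex_valued Phi.
Hypothesis xi_sub : forall a z, xi a z != 0 -> Phi z (v a).

Local Notation eta := pou_trunc.

Definition pou_selection z : E :=
  (\sum_(a \in [set: A]) eta a z)^-1 *: \sum_(a \in [set: A]) eta a z *: v a.

Lemma pou_selectionE {z} {F : {fset A}} : (forall a, a \notin F -> eta a z = 0) ->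
  pou_selection z = \sum_(a <- F) (eta a z / \sum_(b <- F) eta b z) *: v a.
Proof.
move=> etaF; rewrite /pou_selection (fsbigTE F) // (fsbigTE F) => [|a /etaF ->].
  by rewrite scaler_sumr; apply: eq_bigr => a _; rewrite scalerA mulrC.
by rewrite scale0r.
Qed.

Lemma pou_trunc_sum_gt0 {z} {F : {fset A}} : (forall a, a \notin F -> eta a z = 0) ->
  0 < \sum_(b <- F) eta b z.
Proof.
move=> etaF; have [a eta_a] := pou_trunc_exists_gt0 z.
have aF : a \in F by apply: contraT => /etaF eta0; rewrite eta0 ltxx in eta_a.
rewrite (bigD1_seq a) //=; apply: lt_le_trans eta_a _.
by rewrite lerDl sumr_ge0 // => b _; exact: pou_trunc_ge0.
Qed.

Lemma pou_selection_sub (F : {fset A}) a z :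
  eta a z / \sum_(b <- F) eta b z != 0 -> Phi z (v a).
Proof. by rewrite mulf_eq0 negb_or => /andP[/pou_trunc_neq0/xi_sub]. Qed.

Lemma pou_selectionP : selection Phi pou_selection.
Proof.
move=> z; have [F /nbhs_singleton etaF] := pou_trunc_locally_finite z.
have sum_gt0 := pou_trunc_sum_gt0 etaF.
rewrite (pou_selectionE etaF); apply: convex_set_comb => [|a||a].
- exact: Phi_convex.
- by rewrite divr_ge0 ?pou_trunc_ge0 // ltW.
- by rewrite -mulr_suml divff // gt_eqF.
- exact: pou_selection_sub.
Qed.

Lemma pou_selection_locally_finite :
  locally_finite_combination Phi pou_selection.
Proof.
move=> x; have [F etaF] := pou_trunc_locally_finite x.
have sum_gt0 := pou_trunc_sum_gt0 (nbhs_singleton etaF).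
pose a_ := tnth (in_tuple F).
exists (size F), (v \o a_), (fun i z => eta (a_ i) z / \sum_(b <- F) eta b z).
split=> [i|i z|].
- apply: cvgM; first exact: continuous_pou_trunc.
  apply: cvgV; first by rewrite gt_eqF.
  by apply: cvg_sumr => b; exact: continuous_pou_trunc.
- exact: pou_selection_sub.
- by apply: filterS etaF => z etaF; rewrite (pou_selectionE etaF) big_tnth.
Qed.

End selection.

End partition_of_unity.

Definition admits_subordinated_pou (R : realType) (X : topologicalType) :=
  forall (A : choiceType) (U : A -> set X), open_cover U ->
    exists xi : A -> X -> R, index_subordinated_pou U xi.

Lemma locally_finite_selection {R : realType} {X : topologicalType}
    {E : lmodType R} {Phi : X -> set E} :
  admits_subordinated_pou R X ->
  setvalued Phi -> convex_valued Phi -> totally_lsc Phi ->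
  exists f, selection Phi f /\ locally_finite_combination Phi f.
Proof.
move=> pouX Phi_ne Phi_convex Phi_lsc.
have cover : open_cover (fun a : E => [set z | Phi z a]).
  split=> [a|].
    have := Phi_lsc [set a]; congr open; apply/seteqP; split=> z /=.
      by move=> [b [Pb <-]].
    by exists a.
  by apply/seteqP; split=> // z _; have [a Pa] := Phi_ne z; exists a.
have [xi [xi_cont xi01 _ xi_sum1 xi_sub]] := pouX _ _ cover.
have xi_ge0 a z : 0 <= xi a z by have /andP[] := xi01 a z.
have xi_le1 a z : xi a z <= 1 by have /andP[] := xi01 a z.
exists (pou_selection xi id); split.
- by apply: pou_selectionP.
- by apply: pou_selection_locally_finite.
Qed.

Module PointwiseTopology.
Import ArrowAsProduct.
Section pointwise.
Context (A : choiceType) (R : realType).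

Definition pointwise_fun := A -> R^o.
HB.instance Definition _ := GRing.Lmodule.on pointwise_fun.
HB.instance Definition _ := Topological.on pointwise_fun.

Lemma cvg_pointwise (G : set_system pointwise_fun) {FG : Filter G}
    (f : pointwise_fun) :
  (forall a, (fun g : pointwise_fun => g a) @ G --> f a) -> G --> f.
Proof. by move=> Gf; apply/cvg_sup => a; apply: cvg_initial; exact: Gf. Qed.

Lemma continuous_pointwise_eval (a : A) : continuous (fun g : pointwise_fun => g a).
Proof. by move=> f; exact: (@proj_continuous A (fun _ => R^o) a f). Qed.

Lemma pointwise_add_continuous :
  continuous (fun g : pointwise_fun * pointwise_fun => g.1 + g.2).
Proof.
move=> [f g]; apply: cvg_pointwise => a.
have fa : (fun p : pointwise_fun * pointwise_fun => p.1 a) @ (f, g) --> f a.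
  exact: cvg_comp (@cvg_fst _ _ (nbhs f) (nbhs g) (nbhs_filter g))
    (continuous_pointwise_eval a f).
have ga : (fun p : pointwise_fun * pointwise_fun => p.2 a) @ (f, g) --> g a.
  exact: cvg_comp (@cvg_snd _ _ (nbhs f) (nbhs g) (nbhs_filter f))
    (continuous_pointwise_eval a g).
exact: cvgD fa ga.
Qed.

HB.instance Definition _ := PreTopologicalNmodule_isTopologicalNmodule.Build
  pointwise_fun pointwise_add_continuous.

Lemma pointwise_scale_continuous :
  continuous (fun z : R^o * pointwise_fun => z.1 *: z.2).
Proof.
move=> [k f]; apply: cvg_pointwise => a.
have kk : (fun p : R^o * pointwise_fun => p.1) @ (k, f) --> k.
  exact: (@cvg_fst _ _ (nbhs k) (nbhs f) (nbhs_filter f)).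
have fa : (fun p : R^o * pointwise_fun => p.2 a) @ (k, f) --> f a.
  exact: cvg_comp (@cvg_snd _ _ (nbhs k) (nbhs f) (nbhs_filter k))
    (continuous_pointwise_eval a f).
exact: cvgM kk fa.
Qed.

HB.instance Definition _ := TopologicalNmodule_isTopologicalLmodule.Build R
  pointwise_fun pointwise_scale_continuous.

End pointwise.
End PointwiseTopology.
Import PointwiseTopology.

Section cover_simplex.
Context {R : realType} {X : topologicalType} {A : choiceType} (U : A -> set X).

Definition cover_simplex (x : X) : set (A -> R) :=
  [set y | [/\ c00 y, forall a, 0 <= y a, \sum_(a \in [set: A]) y a = 1 &
               forall a, y a != 0 -> U a x]].

Lemma cover_simplex_setvalued : open_cover U -> setvalued cover_simplex.
Proof.
move=> [_ U_cover] x.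
have [a _ Uax] : (\bigcup_(a in [set: A]) U a) x by rewrite U_cover.
pose y b : R := if b == a then 1 else 0.
have ya b : y b != 0 -> b = a by rewrite /y; case: ifP => [/eqP //|_]; rewrite eqxx.
exists y; split=> [|b||b /ya -> //].
- by apply: (@sub_finite_set _ _ [set a]) => // b /= /ya ->.
- by rewrite /y; case: ifP.
rewrite (fsumT_finite_support (finite_set1 a)) => [|b ba]; last first.
  by apply/eqP; apply: contraT => /ya.
by rewrite fset_set1 big_seq_fset1 /y eqxx.
Qed.

Lemma cover_simplex_convex : convex_valued cover_simplex.
Proof.
move=> x y w l; rewrite !inE => -[y_fin y_ge0 y_sum1 yU] [w_fin w_ge0 w_sum1 wU].
set z := conv _ _ _.
have zE a : z a = l%:num * y a + (1 - l%:num) * w a by [].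
have l_ge0 : 0 <= l%:num by [].
have l_le1 : 0 <= 1 - l%:num by rewrite subr_ge0.
have D_fin := c00_supportU y_fin w_fin.
have z0 a : ~ ([set b | y b != 0] `|` [set b | w b != 0]) a -> z a = 0.
  move=> /not_orP [/negP/negPn/eqP ya /negP/negPn/eqP wa].
  by rewrite zE ya wa !mulr0 addr0.
split=> [|a||a za].
- apply: (sub_finite_set _ D_fin) => a /= za; apply: contrapT => /z0 /eqP.
  by rewrite (negbTE za).
- by rewrite zE addr_ge0 // mulr_ge0.
- rewrite (fsumT_finite_support D_fin z0).
  move: y_sum1 w_sum1; rewrite !(fsumT_finite_support D_fin) => [y_sum1 w_sum1|a|a].
  + under eq_bigr do rewrite zE.
    by rewrite big_split /= -!mulr_sumr y_sum1 w_sum1 !mulr1 addrC subrK.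
  + by move=> /not_orP [_ /negP/negPn/eqP].
  + by move=> /not_orP [/negP/negPn/eqP].
- have [ya|/negPn/eqP ya] := boolP (y a != 0); first exact: yU.
  by apply: wU; apply: contraNneq za => wa; rewrite zE ya wa !mulr0 addr0.
Qed.

Lemma cover_simplex_totally_lsc : (forall a, open (U a)) -> totally_lsc cover_simplex.
Proof.
move=> U_open W; rewrite openE => x /= [y [[y_fin y_ge0 y_sum1 yU] Wy]].
have : \forall z \near x, forall a, a \in fset_set [set b | y b != 0] -> U a z.
  apply: near_forall_in_fset => a; rewrite in_fset_set // inE /= => ya.
  by apply: open_nbhs_nbhs; split; [exact: U_open|exact: yU].
apply: filterS => z yUz; exists y; split=> //; split=> // a ya.
by apply: yUz; rewrite in_fset_set // inE.
Qed.

Lemma cover_simplex_pou (f : X -> A -> R) : selection cover_simplex f ->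
  (forall a, continuous (f ^~ a)) -> index_subordinated_pou U (fun a x => f x a).
Proof.
move=> f_sel f_cont; split=> // [a x|x|x|a x /= fxa].
- have [f_fin f_ge0 f_sum1 _] := f_sel x; rewrite f_ge0 -f_sum1 /=.
  exact: le_term_fsumT.
- by apply: finite_set_countable; have [] := f_sel x.
- have [f_fin f_ge0 f_sum1 _] := f_sel x.
  transitivity (\esum_(a in [set a | f x a != 0%R]) (f x a)%:E)%E.
    rewrite (esum_mkcond [set a | f x a != 0]); apply: eq_esum => a _.
    by case: ifPn => //; rewrite notin_setE /= => /negP/negPn/eqP ->.
  rewrite esum_fset // => [|a _]; last by rewrite lee_fin.
  rewrite fsumEFin // -f_sum1 (fsumT_finite_support f_fin) ?fsbig_finite //.
  by move=> a /negP/negPn/eqP.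
- by have [_ _ _] := f_sel x; apply.
Qed.

End cover_simplex.

Definition admits_tvs_selections (R : realType) (X : topologicalType) :=
  forall (E : topologicalLmodType R) (Phi : X -> set E),
    setvalued Phi -> convex_valued Phi -> totally_lsc Phi ->
    exists f : X -> E, selection Phi f /\ continuous f.

Definition admits_l1_selections (R : realType) (X : topologicalType) :=
  forall (A : choiceType) (Phi : X -> set (A -> R)),
    setvalued Phi -> (forall x, Phi x `<=` @c00 R A) ->
    convex_valued Phi -> totally_lsc Phi ->
    exists f : X -> A -> R, selection Phi f /\ l1_continuous f.

Lemma pou_of_tvs_selections (R : realType) (X : topologicalType) :
  admits_tvs_selections R X -> admits_subordinated_pou R X.
Proof.
move=> sel A U U_cover.
have [f [f_sel f_cont]] := sel (pointwise_fun A R) (cover_simplex U)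
  (cover_simplex_setvalued U U_cover) (cover_simplex_convex U)
  (cover_simplex_totally_lsc U U_cover.1).
exists (fun a x => f x a); apply: cover_simplex_pou => // a x.
exact: cvg_comp (f_cont x) (continuous_pointwise_eval A R a (f x)).
Qed.

Lemma pou_of_l1_selections (R : realType) (X : topologicalType) :
  admits_l1_selections R X -> admits_subordinated_pou R X.
Proof.
move=> sel A U U_cover.
have [f [f_sel f_cont]] := sel A (cover_simplex U)
  (cover_simplex_setvalued U U_cover) (fun x y '(And4 y_fin _ _ _) => y_fin)
  (cover_simplex_convex U) (cover_simplex_totally_lsc U U_cover.1).
exists (fun a x => f x a); apply: cover_simplex_pou => // a x.
apply/cvgrPdist_lt => e e0; apply: filterS (f_cont x e e0) => z.
have [[fx_fin _ _ _] [fz_fin _ _ _]] := (f_sel x, f_sel z).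
by rewrite distrC; apply: le_lt_trans (le_l1dist_coord a fz_fin fx_fin).
Qed.

Theorem theorem4p2 (R : realType) (X : topologicalType) (hX : hausdorff_space X) :
  [<->
    (* (i) *)
    (forall (E : topologicalLmodType R) (Phi : X -> set E),
        setvalued Phi -> convex_valued Phi -> totally_lsc Phi ->
        exists f : X -> E, selection Phi f /\ continuous f);
    (* (ii) *)
    (forall (A : choiceType) (Phi : X -> set (A -> R)),
        setvalued Phi -> (forall x, Phi x `<=` @c00 R A) ->
        convex_valued Phi -> totally_lsc Phi ->
        exists f : X -> A -> R, selection Phi f /\ l1_continuous f);
    (* (iii) *)
    (forall (A : choiceType) (U : A -> set X), open_cover U ->
        exists xi : A -> X -> R, index_subordinated_pou U xi);
    (* (iv) *)
    (forall (E : lmodType R) (Phi : X -> set E),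
        setvalued Phi -> convex_valued Phi -> totally_lsc Phi ->
        exists f : X -> E, selection Phi f /\ finite_top_continuous f)].
Proof.
tfae.
- move=> /pou_of_tvs_selections pouX A Phi Phi_ne Phi_c00 Phi_convex Phi_lsc.
  have [f [f_sel f_loc]] := locally_finite_selection pouX Phi_ne Phi_convex Phi_lsc.
  by exists f; split=> //; exact: locally_finite_combination_l1_continuous f_loc.
- exact: pou_of_l1_selections.
- move=> pouX E Phi Phi_ne Phi_convex Phi_lsc.
  have [f [f_sel f_loc]] := locally_finite_selection pouX Phi_ne Phi_convex Phi_lsc.
  exists f; split=> //.
  exact: locally_finite_combination_finite_top_continuous f_loc.
- move=> sel E Phi Phi_ne Phi_convex Phi_lsc.
  have [f [f_sel f_cont]] := sel E Phi Phi_ne Phi_convex Phi_lsc.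
  by exists f; split=> //; exact: finite_top_continuous_continuous.
Qed.
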